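(* Let $\vec a\in\mathbb R^4\setminus\{0\}$, let $V\in\mathfrak X(\mathbb H^3)$ be the proper conformal vector field $V(p)=\vec a+\langle\vec a,p\rangle p$, let $q\neq0$, and let $\gamma\colon I\to\mathbb H^3$ be a curve parametrized by arc-length which is a conformal trajectory of $V$. Then there exist $a_1,a_2\in\mathbb R$ such that $$\langle\gamma(s),\vec a\rangle=a_1\cosh s+a_2\sinh s\quad\text{for all }s\in I.$$ If $\gamma$ is a geodesic, then $\gamma(s)=\cosh(s)\,\vec v+\sinh(s)\,\vec w$ with $\langle\vec v,\vec v\rangle=-1$, $\langle\vec w,\vec w\rangle=1$, $\langle\vec v,\vec w\rangle=0$ and $\vec a\in\operatorname{span}\{\vec v,\vec w\}$; that is, $\gamma$ is obtained by intersecting $\mathbb H^3$ with a Lorentzian (Minkowski) $2$-plane through the origin containing $\vec a$. If $\gamma$ is not a geodesic, then its curvature is constant with $\kappa^2=q^2\big(\langle\vec a,\vec a\rangle+a_1^2-a_2^2\big)$, and its torsion is $\tau(s)=q\,(a_1\sinh s+a_2\cosh s)$.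
   Context: $\mathbb R^4$ carries the Lorentzian metric $\langle\cdot,\cdot\rangle=dx^2+dy^2+dz^2-dt^2$ and $\mathbb H^3=\{p\in\mathbb R^4:\langle p,p\rangle=-1,\ t>0\}$ with the induced Riemannian metric; its Levi-Civita connection satisfies $\nabla_{\gamma'}\gamma'=\gamma''-\gamma$ for unit-speed curves. The cross product of $u,v\in T_p\mathbb H^3$ is the unique $u\times v\in T_p\mathbb H^3$ with $\langle u\times v,w\rangle=\det(u,v,w,p)$ for all $w\in T_p\mathbb H^3$. For a fixed real $q\neq0$, a conformal trajectory of $V$ is a regular curve with $\nabla_{\gamma'}\gamma'=q\,V\times\gamma'$. Frenet frame of a non-geodesic unit-speed curve: $T=\gamma'$, $\nabla_TT=\kappa N$ with $\kappa>0$, $B=T\times N$, $\nabla_TN=-\kappa T+\tau B$, $\nabla_TB=-\tau N$; $\kappa$ is the curvature, $\tau$ the torsion. *)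

From Stdlib Require Import Reals Lra.
From Coquelicot Require Import Coquelicot.
Open Scope R_scope.

(* R^4 with coordinates (x, y, z, t), as a Coquelicot normed module
   (nested products ((x, y), z), t). *)
Definition R4 : Type := (R * R * R * R)%type.
Definition mk4 (x y z t : R) : R4 := (x, y, z, t).
Definition c1 (u : R4) : R := fst (fst (fst u)).
Definition c2 (u : R4) : R := snd (fst (fst u)).
Definition c3 (u : R4) : R := snd (fst u).
Definition c4 (u : R4) : R := snd u.

Definition vadd (u v : R4) : R4 :=
  mk4 (c1 u + c1 v) (c2 u + c2 v) (c3 u + c3 v) (c4 u + c4 v).
Definition vscal (k : R) (u : R4) : R4 :=
  mk4 (k * c1 u) (k * c2 u) (k * c3 u) (k * c4 u).
Definition vsub (u v : R4) : R4 := vadd u (vscal (-1) v).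
Definition vzero : R4 := mk4 0 0 0 0.

Definition lor (u v : R4) : R :=
  c1 u * c1 v + c2 u * c2 v + c3 u * c3 v - c4 u * c4 v.

Definition inH3 (p : R4) : Prop := lor p p = -1 /\ 0 < c4 p.

Definition det3 (a1 a2 a3 b1 b2 b3 d1 d2 d3 : R) : R :=
  a1 * (b2 * d3 - b3 * d2) - a2 * (b1 * d3 - b3 * d1) + a3 * (b1 * d2 - b2 * d1).

Definition det4 (u v w p : R4) : R :=
    c1 u * det3 (c2 v) (c3 v) (c4 v) (c2 w) (c3 w) (c4 w) (c2 p) (c3 p) (c4 p)
  - c2 u * det3 (c1 v) (c3 v) (c4 v) (c1 w) (c3 w) (c4 w) (c1 p) (c3 p) (c4 p)
  + c3 u * det3 (c1 v) (c2 v) (c4 v) (c1 w) (c2 w) (c4 w) (c1 p) (c2 p) (c4 p)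
  - c4 u * det3 (c1 v) (c2 v) (c3 v) (c1 w) (c2 w) (c3 w) (c1 p) (c2 p) (c3 p).

Definition e1 : R4 := mk4 1 0 0 0.
Definition e2 : R4 := mk4 0 1 0 0.
Definition e3 : R4 := mk4 0 0 1 0.
Definition e4 : R4 := mk4 0 0 0 1.

(* Cross product in T_p H^3: the vector with <u x v, w> = det(u,v,w,p). *)
Definition cross (p u v : R4) : R4 :=
  mk4 (det4 u v e1 p) (det4 u v e2 p) (det4 u v e3 p) (- det4 u v e4 p).

Lemma cross_spec (p u v w : R4) : lor (cross p u v) w = det4 u v w p.
Proof.
  destruct u as [[[u1 u2] u3] u4]; destruct v as [[[v1 v2] v3] v4];
  destruct w as [[[w1 w2] w3] w4]; destruct p as [[[p1 p2] p3] p4].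
  unfold lor, cross, det4, det3, mk4, e1, e2, e3, e4, c1, c2, c3, c4; simpl; ring.
Qed.

Lemma cross_tangent (p u v : R4) : lor (cross p u v) p = 0.
Proof.
  destruct u as [[[u1 u2] u3] u4]; destruct v as [[[v1 v2] v3] v4];
  destruct p as [[[p1 p2] p3] p4].
  unfold lor, cross, det4, det3, mk4, e1, e2, e3, e4, c1, c2, c3, c4; simpl; ring.
Qed.

Definition Vfield (a p : R4) : R4 := vadd a (vscal (lor a p) p).

(* Tangential projection onto T_p H^3 (normal direction is p, <p,p> = -1);
   the covariant derivative along gamma of a tangent field X is
   proj (gamma s) (X'(s)). *)
Definition proj (p Y : R4) : R4 := vadd Y (vscal (lor Y p) p).

Definition in_I (lo hi : Rbar) (s : R) : Prop := Rbar_lt lo s /\ Rbar_lt s hi.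

(* Since V(p) = a + <a,p> p and the cross product kills p, V x T = a x T, and
   <a x T, a> = 0.  Hence f = <gamma, a> satisfies f'' = <gamma'', a> = f, so
   f = a1 cosh + a2 sinh.  For a geodesic, gamma'' = gamma forces gamma onto a
   hyperbola cosh v + sinh w, and V x gamma' = 0 makes V parallel to gamma', so
   a = V - <a,gamma> gamma lies in span(gamma, gamma') = span(v, w).  Otherwise
   kappa^2 = q^2 |V x T|^2 = q^2 (<V,V> - <V,T>^2) = q^2 (<a,a> + f^2 - f'^2),
   which is the constant q^2 (<a,a> + a1^2 - a2^2); differentiating
   kappa N = q a x T gives kappa N' = q^2 V x (V x T), and the Lagrange formula
   for the double cross product turns this into -kappa T + q <V,T> B. *)

From Pilot Require Import Defs.
From Stdlib Require Import Reals Lra.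
From Coquelicot Require Import Coquelicot.
Open Scope R_scope.

(** * Vector algebra in Minkowski space *)

Ltac vec_destruct :=
  repeat match goal with v : R4 |- _ => destruct v as [[[? ?] ?] ?] end.

Ltac vec_unfold :=
  cbv beta iota delta [vsub vadd vscal vzero cross det4 det3 lor Vfield proj
    e1 e2 e3 e4 mk4 Defs.c1 Defs.c2 Defs.c3 Defs.c4].

Ltac vec_ring :=
  vec_destruct; vec_unfold; simpl; repeat (apply injective_projections; simpl); ring.

Ltac vec_field :=
  vec_destruct; vec_unfold; simpl; repeat (apply injective_projections; simpl); field.

Lemma lor_sym (u v : R4) : lor u v = lor v u.
Proof. vec_ring. Qed.

Lemma lor_vadd_l (u v w : R4) : lor (vadd u v) w = lor u w + lor v w.
Proof. vec_ring. Qed.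

Lemma lor_vscal_l (k : R) (u v : R4) : lor (vscal k u) v = k * lor u v.
Proof. vec_ring. Qed.

Lemma lor_vscal_r (k : R) (u v : R4) : lor u (vscal k v) = k * lor u v.
Proof. vec_ring. Qed.

Lemma lor_nondegenerate (u v : R4) : (forall w, lor u w = lor v w) -> u = v.
Proof.
  intros H.
  pose proof (H e1) as H1; pose proof (H e2) as H2;
  pose proof (H e3) as H3; pose proof (H e4) as H4.
  clear H. vec_destruct.
  cbv beta iota delta [lor e1 e2 e3 e4 mk4 Defs.c1 Defs.c2 Defs.c3 Defs.c4] in *. simpl in *.
  repeat (apply injective_projections; simpl); lra.
Qed.

Lemma vscal_eq0 (k : R) (u : R4) : k <> 0 -> vscal k u = vzero -> u = vzero.
Proof.
  intros Hk H.
  transitivity (vscal (/ k * k) u); [rewrite Rinv_l by exact Hk; vec_ring |].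
  transitivity (vscal (/ k) (vscal k u)); [vec_ring | rewrite H; vec_ring].
Qed.

Lemma proj_tangent (p Y : R4) : lor Y p = 0 -> proj p Y = Y.
Proof. intros H. unfold proj. rewrite H. vec_ring. Qed.

(* Spacelike-ness of T_p H^3: the reversed Cauchy-Schwarz inequality for the
   timelike vector p. *)
Lemma tangent_spacelike (p u : R4) :
  lor p p = -1 -> lor u p = 0 -> 0 <= lor u u /\ (lor u u = 0 -> u = vzero).
Proof.
  intros Hp Hu. vec_destruct.
  cbv beta iota delta [lor vzero mk4 Defs.c1 Defs.c2 Defs.c3 Defs.c4] in *. simpl in *.
  rename r into u1, r0 into u2, r1 into u3, r2 into u4,
         r3 into p1, r4 into p2, r5 into p3, r6 into p4.
  assert (Lagrange : (u1*u1+u2*u2+u3*u3)*(p1*p1+p2*p2+p3*p3) - (u1*p1+u2*p2+u3*p3)^2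
     = (u1*p2-u2*p1)^2 + (u1*p3-u3*p1)^2 + (u2*p3-u3*p2)^2) by ring.
  replace (u1*p1+u2*p2+u3*p3) with (u4*p4) in Lagrange by lra.
  replace (p1*p1+p2*p2+p3*p3) with (p4*p4 - 1) in Lagrange by lra.
  assert (0 <= (u1*p2-u2*p1)^2 + (u1*p3-u3*p1)^2 + (u2*p3-u3*p2)^2)
    by (repeat apply Rplus_le_le_0_compat; apply pow2_ge_0).
  assert (p4 * p4 >= 1) by nra.
  assert (p4*p4 * ((u1*u1+u2*u2+u3*u3) - u4*u4) >= u1*u1+u2*u2+u3*u3) by nra.
  split; [nra |].
  intros Z. assert (u1*u1+u2*u2+u3*u3 <= 0) by nra.
  assert (u1 = 0) by nra. assert (u2 = 0) by nra. assert (u3 = 0) by nra.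
  assert (u4 = 0) by nra. subst. reflexivity.
Qed.

Lemma cross_diag (u v : R4) : cross u v u = vzero.
Proof. vec_ring. Qed.

Lemma cross_vzero (p v : R4) : cross p vzero v = vzero.
Proof. vec_ring. Qed.

Lemma cross_vadd_p (p u v : R4) : cross p u (vadd p v) = cross p u v.
Proof. vec_ring. Qed.

Lemma cross_vscal (p u v : R4) (k : R) : cross p u (vscal k v) = vscal k (cross p u v).
Proof. vec_ring. Qed.

Lemma cross_Vfield (a p v : R4) : cross p (Vfield a p) v = cross p a v.
Proof. vec_ring. Qed.

Lemma lor_cross_l (p u v : R4) : lor (cross p u v) u = 0.
Proof. vec_ring. Qed.

Lemma cross_cross_expand (p u v w : R4) :
  cross p u (cross p v w) =
  vscal (-1) (vadd (vadd
    (vscal (lor u w * lor p p - lor u p * lor w p) v)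
    (vscal (- (lor u v * lor p p - lor u p * lor v p)) w))
    (vscal (lor u v * lor w p - lor u w * lor v p) p)).
Proof. vec_ring. Qed.

Lemma lor_cross_cross_expand (p u v : R4) :
  lor (cross p u v) (cross p u v) =
  - (lor u u * (lor v v * lor p p - lor v p * lor v p)
     - lor u v * (lor u v * lor p p - lor v p * lor u p)
     + lor u p * (lor u v * lor v p - lor v v * lor u p)).
Proof. vec_ring. Qed.

Lemma cross_cross (p u v w : R4) :
  lor p p = -1 -> lor u p = 0 -> lor v p = 0 -> lor w p = 0 ->
  cross p u (cross p v w) = vadd (vscal (lor u w) v) (vscal (- lor u v) w).
Proof.
  intros Hp Hu Hv Hw. rewrite cross_cross_expand, Hp, Hu, Hv, Hw. vec_ring.
Qed.

Lemma lor_cross_cross (p u v : R4) :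
  lor p p = -1 -> lor u p = 0 -> lor v p = 0 ->
  lor (cross p u v) (cross p u v) = lor u u * lor v v - lor u v ^ 2.
Proof. intros Hp Hu Hv. rewrite lor_cross_cross_expand, Hp, Hu, Hv. ring. Qed.

Lemma cross_eq0_parallel (p u v : R4) :
  lor p p = -1 -> lor u p = 0 -> lor v p = 0 -> lor v v = 1 ->
  cross p u v = vzero -> u = vscal (lor u v) v.
Proof.
  intros Hp Hu Hv Hvv Huv.
  set (d := vadd u (vscal (- lor u v) v)).
  assert (Hd : lor d p = 0) by (unfold d; rewrite lor_vadd_l, lor_vscal_l, Hu, Hv; ring).
  assert (Hdd : lor d d = lor (cross p u v) (cross p u v)).
  { rewrite lor_cross_cross, Hvv by assumption. unfold d.
    rewrite !lor_vadd_l, !lor_vscal_l, !(lor_sym _ (vadd _ _)), !lor_vadd_l, !lor_vscal_l,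
      (lor_sym v u), Hvv. ring. }
  rewrite Huv in Hdd. replace (lor vzero vzero) with 0 in Hdd by vec_ring.
  apply (tangent_spacelike p d Hp Hd) in Hdd.
  transitivity (vadd d (vscal (lor u v) v)); [unfold d; vec_ring | rewrite Hdd; vec_ring].
Qed.

(* kappa N' = q^2 V x (V x T) for N = (q / kappa) V x T, compared with -kappa T + tau B. *)
Lemma frenet_identity (p V T : R4) (q k : R) :
  lor p p = -1 -> lor V p = 0 -> lor T p = 0 -> lor T T = 1 -> k <> 0 ->
  k * k = q ^ 2 * (lor V V - lor V T ^ 2) ->
  proj p (vscal (/ k) (vscal q (vscal q (cross p V (cross p V T))))) =
  vadd (vscal (- k) T)
       (vscal (q * lor V T) (cross p T (vscal (/ k) (vscal q (cross p V T))))).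
Proof.
  intros Hp HV HT HTT Hk Hkk.
  assert (Hq : q <> 0) by (intros ->; apply Hk; nra).
  assert (HVV : lor V V = k * k / q ^ 2 + lor V T ^ 2) by (rewrite Hkk; field; exact Hq).
  rewrite proj_tangent by (rewrite !lor_vscal_l, cross_tangent; ring).
  rewrite !cross_vscal, !cross_cross by (rewrite ?cross_tangent; assumption).
  rewrite HTT, (lor_sym T V), HVV.
  generalize (lor V T); intros phi.
  vec_field; auto.
Qed.

Lemma lor_Vfield_p (a p : R4) : lor p p = -1 -> lor (Vfield a p) p = 0.
Proof.
  intros Hp. transitivity (lor a p * (1 + lor p p)); [vec_ring | rewrite Hp; ring].
Qed.

Lemma lor_Vfield_tangent (a p u : R4) : lor p u = 0 -> lor (Vfield a p) u = lor a u.
Proof.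
  intros Hu. transitivity (lor a u + lor a p * lor p u); [vec_ring | rewrite Hu; ring].
Qed.

Lemma lor_Vfield_Vfield (a p : R4) :
  lor p p = -1 -> lor (Vfield a p) (Vfield a p) = lor a a + lor a p ^ 2.
Proof.
  intros Hp.
  transitivity (lor a a + 2 * lor a p * lor a p + lor a p * lor a p * lor p p);
    [vec_ring | rewrite Hp; ring].
Qed.

Lemma lor_boost (c sh c' sh' : R) (p u : R4) :
  lor (vadd (vscal c p) (vscal sh u)) (vadd (vscal c' p) (vscal sh' u)) =
  c * c' * lor p p + (c * sh' + sh * c') * lor p u + sh * sh' * lor u u.
Proof. vec_ring. Qed.

Lemma vsub_eq (u v w : R4) : vsub u v = w -> u = vadd v w.
Proof. intros <-. vec_ring. Qed.

Lemma vadd_vzero_l (u : R4) : vadd vzero u = u.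
Proof. vec_ring. Qed.

Lemma lor_vzero_l (u : R4) : lor vzero u = 0.
Proof. vec_ring. Qed.

Lemma Vfield_decomp (a p : R4) : a = vadd (Vfield a p) (vscal (- lor a p) p).
Proof. vec_ring. Qed.

Lemma span_boost (a p u : R4) (c sh l m : R) : c * c - sh * sh = 1 ->
  a = vadd (vscal l u) (vscal m p) ->
  a = vadd (vscal (l * sh + m * c) (vadd (vscal c p) (vscal (- sh) u)))
           (vscal (l * c + m * sh) (vadd (vscal (- sh) p) (vscal c u))).
Proof.
  intros Hc ->.
  transitivity (vadd (vscal (l * (c * c - sh * sh)) u) (vscal (m * (c * c - sh * sh)) p));
    [rewrite Hc; vec_ring | vec_ring].
Qed.

Lemma cosh_sinh_sq (x : R) : cosh x * cosh x - sinh x * sinh x = 1.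
Proof. unfold cosh, sinh. rewrite exp_Ropp. field. apply Rgt_not_eq, exp_pos. Qed.

(** * Derivatives of curves in R^4 *)

Lemma is_derive_pair {U V : NormedModule R_AbsRing} (f : R -> U) (g : R -> V) s df dg :
  is_derive f s df -> is_derive g s dg -> is_derive (fun t => (f t, g t)) s (df, dg).
Proof.
  intros Hf Hg.
  apply (filterdiff_comp'_2 f g pair s _ _ pair Hf Hg), filterdiff_linear.
  apply (is_linear_ext (fun t => t)); [now intros [] | apply is_linear_id].
Qed.

Lemma is_derive_fst {U V : NormedModule R_AbsRing} (f : R -> U * V) s df :
  is_derive f s df -> is_derive (fun t => fst (f t)) s (fst df).
Proof.
  intros H. apply (filterdiff_comp' f fst s _ fst H), filterdiff_linear, is_linear_fst.
Qed.

Lemma is_derive_snd {U V : NormedModule R_AbsRing} (f : R -> U * V) s df :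
  is_derive f s df -> is_derive (fun t => snd (f t)) s (snd df).
Proof.
  intros H. apply (filterdiff_comp' f snd s _ snd H), filterdiff_linear, is_linear_snd.
Qed.

Lemma is_derive_c1 (G : R -> R4) (s : R) (L : R4) :
  is_derive G s L -> is_derive (fun t => Defs.c1 (G t)) s (Defs.c1 L).
Proof. intros H; do 2 apply is_derive_fst in H; exact (is_derive_fst _ _ _ H). Qed.

Lemma is_derive_c2 (G : R -> R4) (s : R) (L : R4) :
  is_derive G s L -> is_derive (fun t => Defs.c2 (G t)) s (Defs.c2 L).
Proof. intros H; do 2 apply is_derive_fst in H; exact (is_derive_snd _ _ _ H). Qed.

Lemma is_derive_c3 (G : R -> R4) (s : R) (L : R4) :
  is_derive G s L -> is_derive (fun t => Defs.c3 (G t)) s (Defs.c3 L).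
Proof. intros H; apply is_derive_fst in H; exact (is_derive_snd _ _ _ H). Qed.

Lemma is_derive_c4 (G : R -> R4) (s : R) (L : R4) :
  is_derive G s L -> is_derive (fun t => Defs.c4 (G t)) s (Defs.c4 L).
Proof. exact (is_derive_snd G s L). Qed.

Lemma is_derive_Rplus (f g : R -> R) s df dg :
  is_derive f s df -> is_derive g s dg -> is_derive (fun t => f t + g t) s (df + dg).
Proof. exact (is_derive_plus (V := R_NormedModule) f g s df dg). Qed.

Lemma is_derive_Rminus (f g : R -> R) s df dg :
  is_derive f s df -> is_derive g s dg -> is_derive (fun t => f t - g t) s (df - dg).
Proof. exact (is_derive_minus (V := R_NormedModule) f g s df dg). Qed.

Lemma is_derive_Ropp (f : R -> R) s df :
  is_derive f s df -> is_derive (fun t => - f t) s (- df).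
Proof. exact (is_derive_opp (V := R_NormedModule) f s df). Qed.

Lemma is_derive_Rmult (f g : R -> R) s df dg :
  is_derive f s df -> is_derive g s dg ->
  is_derive (fun t => f t * g t) s (df * g s + f s * dg).
Proof. intros Hf Hg. apply (is_derive_mult f g s df dg Hf Hg), Rmult_comm. Qed.

Lemma is_derive_Rconst (c s : R) : is_derive (fun _ => c) s 0.
Proof. exact (is_derive_const (V := R_NormedModule) c s). Qed.

Lemma is_derive_eq (f : R -> R) (s l l' : R) :
  is_derive f s l -> l = l' -> is_derive f s l'.
Proof. now intros H <-. Qed.

(* [auto_derive] cannot see through the coordinates of R4-valued curves, so
   polynomials in them are differentiated rule by rule; each leaf is closed by a
   derivative hypothesis (matched syntactically, for speed) or as a constant. *)
Ltac derive_leaf :=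
  lazymatch goal with
  | H : is_derive ?G _ _ |- is_derive ?G _ _ => exact H
  | H : is_derive ?G _ _ |- is_derive (fun t => ?G t) _ _ => exact H
  end.

Ltac derive_poly :=
  lazymatch goal with
  | |- is_derive (fun t => @?f t + @?g t) _ _ => apply (is_derive_Rplus f g); derive_poly
  | |- is_derive (fun t => @?f t - @?g t) _ _ => apply (is_derive_Rminus f g); derive_poly
  | |- is_derive (fun t => - @?f t) _ _ => apply (is_derive_Ropp f); derive_poly
  | |- is_derive (fun t => @?f t * @?g t) _ _ => apply (is_derive_Rmult f g); derive_poly
  | |- is_derive (fun t => Defs.c1 _) _ _ =>
      first [apply is_derive_c1; derive_leaf | apply is_derive_Rconst]
  | |- is_derive (fun t => Defs.c2 _) _ _ =>
      first [apply is_derive_c2; derive_leaf | apply is_derive_Rconst]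
  | |- is_derive (fun t => Defs.c3 _) _ _ =>
      first [apply is_derive_c3; derive_leaf | apply is_derive_Rconst]
  | |- is_derive (fun t => Defs.c4 _) _ _ =>
      first [apply is_derive_c4; derive_leaf | apply is_derive_Rconst]
  | _ => apply is_derive_Rconst
  end.

Ltac derive_by_coords :=
  intros; cbv beta iota delta [lor cross det4 det3 vadd vscal mk4];
  repeat apply is_derive_pair;
  (eapply is_derive_eq;
   [derive_poly | cbv beta; cbn [Defs.c1 Defs.c2 Defs.c3 Defs.c4 fst snd]; ring]).

Lemma is_derive_lor (U W : R -> R4) (s : R) (dU dW : R4) :
  is_derive U s dU -> is_derive W s dW ->
  is_derive (fun t => lor (U t) (W t)) s (lor dU (W s) + lor (U s) dW).
Proof. derive_by_coords. Qed.

Lemma is_derive_cross (P U W : R -> R4) (s : R) (dP dU dW : R4) :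
  is_derive P s dP -> is_derive U s dU -> is_derive W s dW ->
  is_derive (fun t => cross (P t) (U t) (W t)) s
    (vadd (vadd (cross dP (U s) (W s)) (cross (P s) dU (W s))) (cross (P s) (U s) dW)).
Proof. derive_by_coords. Qed.

Lemma is_derive_vscal (k : R) (U : R -> R4) (s : R) (dU : R4) :
  is_derive U s dU -> is_derive (fun t => vscal k (U t)) s (vscal k dU).
Proof. derive_by_coords. Qed.

Lemma is_derive_vconst (a : R4) (s : R) : is_derive (fun _ => a) s vzero.
Proof. exact (is_derive_const a s). Qed.

Lemma is_derive_lor_const (U : R -> R4) (b : R4) (s : R) (dU : R4) :
  is_derive U s dU -> is_derive (fun t => lor (U t) b) s (lor dU b).
Proof. derive_by_coords. Qed.

(** * Solutions of f'' = f on an interval *)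

Lemma in_I_between (lo hi : Rbar) (x y z : R) :
  in_I lo hi x -> in_I lo hi y -> x <= z <= y -> in_I lo hi z.
Proof.
  intros [Hx _] [_ Hy] [Hxz Hzy]; split.
  - apply (Rbar_lt_le_trans lo x z); auto.
  - apply (Rbar_le_lt_trans z y hi); auto.
Qed.

Lemma in_I_locally (lo hi : Rbar) (s : R) : in_I lo hi s -> locally s (in_I lo hi).
Proof.
  intros Hs. apply (locally_open (in_I lo hi)); auto.
  apply open_and; [apply open_Rbar_gt | apply open_Rbar_lt].
Qed.

Lemma in_I_nonempty (lo hi : Rbar) : Rbar_lt lo hi -> exists s, in_I lo hi s.
Proof.
  intros H. unfold in_I.
  destruct lo as [l| |], hi as [h| |]; simpl in *; try contradiction.
  - exists ((l + h) / 2); simpl; split; lra.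
  - exists (l + 1); simpl; split; auto; lra.
  - exists (h - 1); simpl; split; auto; lra.
  - exists 0; simpl; auto.
Qed.

Lemma derive_zero_constant (lo hi : Rbar) (h : R -> R) :
  (forall t, in_I lo hi t -> is_derive h t 0) ->
  forall x y, in_I lo hi x -> in_I lo hi y -> h x = h y.
Proof.
  intros Hd x y Hx Hy.
  assert (Hin : forall z, Rmin x y <= z <= Rmax x y -> in_I lo hi z).
  { intros z Hz. unfold Rmin, Rmax in Hz. destruct (Rle_dec x y).
    - apply (in_I_between lo hi x y z); auto.
    - apply (in_I_between lo hi y x z); auto; lra. }
  destruct (MVT_gen h x y (fun _ => 0)) as [c [_ Hc]].
  - intros z Hz. apply Hd, Hin; lra.
  - intros z Hz. apply continuity_pt_filterlim, (ex_derive_continuous (V := R_NormedModule)).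
    exists 0. apply Hd, Hin; auto.
  - lra.
Qed.

Lemma exp_ode_invariant (lo hi : Rbar) (g : R -> R) (c s0 : R) :
  (forall t, in_I lo hi t -> is_derive g t (c * g t)) -> in_I lo hi s0 ->
  forall t, in_I lo hi t -> g t * exp (- (c * t)) = g s0 * exp (- (c * s0)).
Proof.
  intros Hg Hs0 t Ht.
  apply (derive_zero_constant lo hi (fun t => g t * exp (- (c * t)))); auto.
  intros u Hu.
  assert (He : is_derive (fun t => exp (- (c * t))) u (- c * exp (- (c * u))))
    by (auto_derive; [exact I | ring]).
  eapply is_derive_eq; [exact (is_derive_Rmult _ _ _ _ _ (Hg u Hu) He) | cbv beta; ring].
Qed.

(* f + f' and f - f' solve g' = g and g' = -g. *)
Lemma hyperbolic_ode (lo hi : Rbar) (f f1 : R -> R) (s0 : R) :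
  in_I lo hi s0 ->
  (forall t, in_I lo hi t -> is_derive f t (f1 t)) ->
  (forall t, in_I lo hi t -> is_derive f1 t (f t)) ->
  forall t, in_I lo hi t ->
    f t = (cosh s0 * f s0 - sinh s0 * f1 s0) * cosh t
          + (cosh s0 * f1 s0 - sinh s0 * f s0) * sinh t /\
    f1 t = (cosh s0 * f s0 - sinh s0 * f1 s0) * sinh t
          + (cosh s0 * f1 s0 - sinh s0 * f s0) * cosh t.
Proof.
  intros Hs0 Hf Hf1 t Ht.
  assert (Hsum := exp_ode_invariant lo hi (fun t => f t + f1 t) 1 s0
    ltac:(intros u Hu; eapply is_derive_eq;
          [exact (is_derive_Rplus _ _ _ _ _ (Hf u Hu) (Hf1 u Hu)) | cbv beta; ring]) Hs0 t Ht).
  assert (Hdiff := exp_ode_invariant lo hi (fun t => f t - f1 t) (-1) s0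
    ltac:(intros u Hu; eapply is_derive_eq;
          [exact (is_derive_Rminus _ _ _ _ _ (Hf u Hu) (Hf1 u Hu)) | cbv beta; ring]) Hs0 t Ht).
  simpl in Hsum, Hdiff.
  replace (- (1 * t)) with (- t) in Hsum by ring.
  replace (- (1 * s0)) with (- s0) in Hsum by ring.
  replace (- (-1 * t)) with t in Hdiff by ring.
  replace (- (-1 * s0)) with s0 in Hdiff by ring.
  rewrite !exp_Ropp in Hsum.
  assert (Et := exp_pos t). assert (E0 := exp_pos s0).
  assert (Hs : f t + f1 t = (f s0 + f1 s0) / exp s0 * exp t).
  { transitivity ((f t + f1 t) * / exp t * exp t); [field; lra | rewrite Hsum; field; lra]. }
  assert (Hd : f t - f1 t = (f s0 - f1 s0) * exp s0 / exp t).
  { transitivity ((f t - f1 t) * exp t / exp t); [field; lra | rewrite Hdiff; field; lra]. }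
  assert (Hx : f t = ((f t + f1 t) + (f t - f1 t)) / 2) by field.
  assert (Hy : f1 t = ((f t + f1 t) - (f t - f1 t)) / 2) by field.
  rewrite Hs, Hd in Hx, Hy. rewrite Hx, Hy. unfold cosh, sinh. rewrite !exp_Ropp.
  split; field; lra.
Qed.

(** * Conformal trajectories of V in H^3 *)

Section ConformalTrajectory.

Variables (a : R4) (q : R) (lo hi : Rbar) (gamma gamma1 gamma2 : R -> R4).
Hypothesis Hd1 : forall s, in_I lo hi s -> is_derive gamma s (gamma1 s).
Hypothesis Hd2 : forall s, in_I lo hi s -> is_derive gamma1 s (gamma2 s).
Hypothesis HH3 : forall s, in_I lo hi s -> inH3 (gamma s).
Hypothesis Hunit : forall s, in_I lo hi s -> lor (gamma1 s) (gamma1 s) = 1.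
Hypothesis Htraj : forall s, in_I lo hi s ->
  vsub (gamma2 s) (gamma s) = vscal q (cross (gamma s) (Vfield a (gamma s)) (gamma1 s)).

Lemma curve_lor_pp (s : R) : in_I lo hi s -> lor (gamma s) (gamma s) = -1.
Proof. intros Hs. exact (proj1 (HH3 s Hs)). Qed.

Lemma curve_lor_Tp (s : R) : in_I lo hi s -> lor (gamma1 s) (gamma s) = 0.
Proof.
  intros Hs.
  assert (Hconst : is_derive (fun t => lor (gamma t) (gamma t)) s 0).
  { apply (is_derive_ext_loc (fun _ => -1)); [| apply is_derive_Rconst].
    apply (filter_imp (in_I lo hi)); [| exact (in_I_locally lo hi s Hs)].
    intros t Ht. symmetry. exact (curve_lor_pp t Ht). }
  pose proof (is_derive_lor gamma gamma s _ _ (Hd1 s Hs) (Hd1 s Hs)) as Hsq.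
  rewrite (lor_sym (gamma s) (gamma1 s)) in Hsq.
  apply is_derive_unique in Hconst. apply is_derive_unique in Hsq. lra.
Qed.

Lemma curve_lor_Vp (s : R) : in_I lo hi s -> lor (Vfield a (gamma s)) (gamma s) = 0.
Proof. intros Hs. exact (lor_Vfield_p a _ (curve_lor_pp s Hs)). Qed.

Lemma curve_lor_VT (s : R) : in_I lo hi s ->
  lor (Vfield a (gamma s)) (gamma1 s) = lor (gamma1 s) a.
Proof.
  intros Hs. rewrite lor_Vfield_tangent, lor_sym; [reflexivity |].
  rewrite lor_sym. exact (curve_lor_Tp s Hs).
Qed.

Lemma curve_accel (s : R) : in_I lo hi s ->
  vsub (gamma2 s) (gamma s) = vscal q (cross (gamma s) a (gamma1 s)).
Proof. intros Hs. rewrite Htraj, cross_Vfield by exact Hs. reflexivity. Qed.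

Lemma curve_accel_tangent (s : R) : in_I lo hi s ->
  lor (vsub (gamma2 s) (gamma s)) (gamma s) = 0.
Proof. intros Hs. rewrite curve_accel, lor_vscal_l, cross_tangent by exact Hs. ring. Qed.

Lemma curve_lor_accel_a (s : R) : in_I lo hi s -> lor (gamma2 s) a = lor (gamma s) a.
Proof.
  intros Hs. rewrite (vsub_eq _ _ _ (curve_accel s Hs)), lor_vadd_l, lor_vscal_l, lor_cross_l.
  ring.
Qed.

(* Position and velocity at time 0 of the unit-speed geodesic through gamma s0
   with velocity gamma1 s0. *)
Definition base_point (s0 : R) : R4 :=
  vadd (vscal (cosh s0) (gamma s0)) (vscal (- sinh s0) (gamma1 s0)).
Definition base_velocity (s0 : R) : R4 :=
  vadd (vscal (- sinh s0) (gamma s0)) (vscal (cosh s0) (gamma1 s0)).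

Lemma lor_hyperbolic (b : R4) (s0 : R) : in_I lo hi s0 ->
  (forall t, in_I lo hi t -> lor (gamma2 t) b = lor (gamma t) b) ->
  forall t, in_I lo hi t ->
    lor (gamma t) b = lor (base_point s0) b * cosh t + lor (base_velocity s0) b * sinh t /\
    lor (gamma1 t) b = lor (base_point s0) b * sinh t + lor (base_velocity s0) b * cosh t.
Proof.
  intros Hs0 Hb t Ht.
  destruct (hyperbolic_ode lo hi (fun t => lor (gamma t) b) (fun t => lor (gamma1 t) b) s0 Hs0)
    with (t := t) as [E E1]; auto.
  - intros u Hu. exact (is_derive_lor_const _ b _ _ (Hd1 u Hu)).
  - intros u Hu. rewrite <- Hb by exact Hu. exact (is_derive_lor_const _ b _ _ (Hd2 u Hu)).
  - unfold base_point, base_velocity. rewrite !lor_vadd_l, !lor_vscal_l, E, E1.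
    split; ring.
Qed.

Lemma base_orthonormal (s0 : R) : in_I lo hi s0 ->
  lor (base_point s0) (base_point s0) = -1 /\
  lor (base_velocity s0) (base_velocity s0) = 1 /\
  lor (base_point s0) (base_velocity s0) = 0.
Proof.
  intros Hs0. unfold base_point, base_velocity.
  rewrite !lor_boost, curve_lor_pp, Hunit, (lor_sym (gamma s0)), curve_lor_Tp by exact Hs0.
  pose proof (cosh_sinh_sq s0). repeat split; nra.
Qed.

Section Geodesic.

Hypothesis Hgeo : forall s, in_I lo hi s -> vsub (gamma2 s) (gamma s) = vzero.

Lemma geodesic_hyperbola (s0 : R) : in_I lo hi s0 -> forall t, in_I lo hi t ->
  gamma t = vadd (vscal (cosh t) (base_point s0)) (vscal (sinh t) (base_velocity s0)).
Proof.
  intros Hs0 t Ht. apply lor_nondegenerate. intros b.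
  assert (Hb : forall u, in_I lo hi u -> lor (gamma2 u) b = lor (gamma u) b).
  { intros u Hu. rewrite (vsub_eq _ _ _ (Hgeo u Hu)), lor_vadd_l, lor_vzero_l. ring. }
  rewrite lor_vadd_l, !lor_vscal_l, (proj1 (lor_hyperbolic b s0 Hs0 Hb t Ht)). ring.
Qed.

Lemma geodesic_axis_in_plane (s0 : R) : q <> 0 -> in_I lo hi s0 ->
  exists l1 l2, a = vadd (vscal l1 (base_point s0)) (vscal l2 (base_velocity s0)).
Proof.
  intros Hq Hs0.
  assert (Hcross : cross (gamma s0) (Vfield a (gamma s0)) (gamma1 s0) = vzero).
  { apply (vscal_eq0 q); [exact Hq |]. rewrite <- Htraj, Hgeo by exact Hs0. reflexivity. }
  apply cross_eq0_parallel in Hcross;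
    [| exact (curve_lor_pp s0 Hs0) | exact (curve_lor_Vp s0 Hs0)
     | exact (curve_lor_Tp s0 Hs0) | exact (Hunit s0 Hs0)].
  rewrite curve_lor_VT in Hcross by exact Hs0.
  eexists; eexists. unfold base_point, base_velocity.
  apply span_boost; [apply cosh_sinh_sq |].
  rewrite (Vfield_decomp a (gamma s0)) at 1. rewrite Hcross. reflexivity.
Qed.

End Geodesic.

Lemma curve_lor_accel_accel (s : R) : in_I lo hi s ->
  lor (vsub (gamma2 s) (gamma s)) (vsub (gamma2 s) (gamma s)) =
  q ^ 2 * (lor (Vfield a (gamma s)) (Vfield a (gamma s))
           - lor (Vfield a (gamma s)) (gamma1 s) ^ 2).
Proof.
  intros Hs. rewrite Htraj, lor_vscal_l, lor_vscal_r by exact Hs.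
  rewrite lor_cross_cross
    by first [exact (curve_lor_pp s Hs) | exact (curve_lor_Vp s Hs) | exact (curve_lor_Tp s Hs)].
  rewrite Hunit by exact Hs. ring.
Qed.

Lemma curve_curvature_sq (s : R) : in_I lo hi s ->
  lor (vsub (gamma2 s) (gamma s)) (vsub (gamma2 s) (gamma s)) =
  q ^ 2 * (lor a a + lor (gamma s) a ^ 2 - lor (gamma1 s) a ^ 2).
Proof.
  intros Hs. rewrite curve_lor_accel_accel, curve_lor_VT by exact Hs.
  rewrite lor_Vfield_Vfield, (lor_sym a (gamma s)) by exact (curve_lor_pp s Hs).
  reflexivity.
Qed.

Lemma curve_curvature_sq_const (a1 a2 : R) :
  (forall t, in_I lo hi t ->
     lor (gamma t) a = a1 * cosh t + a2 * sinh t /\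
     lor (gamma1 t) a = a1 * sinh t + a2 * cosh t) ->
  forall t, in_I lo hi t ->
    lor (vsub (gamma2 t) (gamma t)) (vsub (gamma2 t) (gamma t)) =
    q ^ 2 * (lor a a + a1 ^ 2 - a2 ^ 2).
Proof.
  intros Hf t Ht. destruct (Hf t Ht) as [E E1].
  rewrite curve_curvature_sq, E, E1 by exact Ht.
  transitivity (q ^ 2 * (lor a a + (a1 ^ 2 - a2 ^ 2) * (cosh t * cosh t - sinh t * sinh t)));
    [ring | rewrite cosh_sinh_sq; ring].
Qed.

Lemma accel_derivative (c s : R) : in_I lo hi s ->
  is_derive (fun t => vscal c (vsub (gamma2 t) (gamma t))) s
    (vscal c (vscal q (vscal q
      (cross (gamma s) (Vfield a (gamma s)) (cross (gamma s) (Vfield a (gamma s)) (gamma1 s)))))).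
Proof.
  intros Hs.
  apply (is_derive_ext_loc (fun t => vscal c (vscal q (cross (gamma t) a (gamma1 t))))).
  { apply (filter_imp (in_I lo hi)); [| exact (in_I_locally lo hi s Hs)].
    intros t Ht. rewrite curve_accel by exact Ht. reflexivity. }
  pose proof (is_derive_cross gamma (fun _ => a) gamma1 s _ _ _
    (Hd1 s Hs) (is_derive_vconst a s) (Hd2 s Hs)) as D.
  rewrite cross_diag, cross_vzero, !vadd_vzero_l, (vsub_eq _ _ _ (curve_accel s Hs)),
    cross_vadd_p, cross_vscal, <- (cross_Vfield a (gamma s) (gamma1 s)),
    <- cross_Vfield in D.
  exact (is_derive_vscal c _ s _ (is_derive_vscal q _ s _ D)).
Qed.

Lemma frenet_equations (a1 a2 : R) :
  (forall t, in_I lo hi t ->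
     lor (gamma t) a = a1 * cosh t + a2 * sinh t /\
     lor (gamma1 t) a = a1 * sinh t + a2 * cosh t) ->
  (exists s0, in_I lo hi s0 /\ vsub (gamma2 s0) (gamma s0) <> vzero) ->
  let kappa := fun s => sqrt (lor (vsub (gamma2 s) (gamma s)) (vsub (gamma2 s) (gamma s))) in
  let N := fun s => vscal (/ kappa s) (vsub (gamma2 s) (gamma s)) in
  let B := fun s => cross (gamma s) (gamma1 s) (N s) in
  forall s, in_I lo hi s ->
    kappa s ^ 2 = q ^ 2 * (lor a a + a1 ^ 2 - a2 ^ 2) /\
    exists dN : R4, is_derive N s dN /\
      proj (gamma s) dN =
      vadd (vscal (- kappa s) (gamma1 s))
           (vscal (q * (a1 * sinh s + a2 * cosh s)) (B s)).
Proof.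
  intros Hf [s1 [Hs1 Hne]] kappa N B s Hs.
  set (C0 := q ^ 2 * (lor a a + a1 ^ 2 - a2 ^ 2)).
  assert (HK : forall t, in_I lo hi t ->
    lor (vsub (gamma2 t) (gamma t)) (vsub (gamma2 t) (gamma t)) = C0)
    by exact (curve_curvature_sq_const a1 a2 Hf).
  assert (C0pos : 0 < C0).
  { destruct (tangent_spacelike _ _ (curve_lor_pp s1 Hs1) (curve_accel_tangent s1 Hs1))
      as [Hge Hzero].
    rewrite HK in Hge, Hzero by exact Hs1.
    destruct (Rle_lt_or_eq_dec 0 C0 Hge) as [| E]; [assumption |].
    exfalso. apply Hne, Hzero. auto. }
  set (k := sqrt C0).
  assert (kpos : 0 < k) by exact (sqrt_lt_R0 C0 C0pos).
  assert (kk : k * k = C0) by (apply sqrt_sqrt; lra).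
  assert (Hkappa : forall t, in_I lo hi t -> kappa t = k).
  { intros t Ht. unfold kappa. rewrite HK by exact Ht. reflexivity. }
  split; [rewrite Hkappa by exact Hs; rewrite <- kk; ring |].
  eexists. split.
  - apply (is_derive_ext_loc (fun t => vscal (/ k) (vsub (gamma2 t) (gamma t))));
      [| exact (accel_derivative (/ k) s Hs)].
    apply (filter_imp (in_I lo hi)); [| exact (in_I_locally lo hi s Hs)].
    intros t Ht. unfold N. rewrite Hkappa by exact Ht. reflexivity.
  - unfold B, N. destruct (Hf s Hs) as [_ E1].
    rewrite Hkappa, curve_accel, <- (cross_Vfield a (gamma s) (gamma1 s)), <- E1,
      <- curve_lor_VT by exact Hs.
    apply frenet_identity;
      [exact (curve_lor_pp s Hs) | exact (curve_lor_Vp s Hs) | exact (curve_lor_Tp s Hs)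
      | exact (Hunit s Hs) | lra |].
    rewrite kk, <- (HK s Hs). exact (curve_lor_accel_accel s Hs).
Qed.

End ConformalTrajectory.

Theorem theorem3
  (a : R4) (q : R) (lo hi : Rbar)
  (gamma gamma1 gamma2 gamma3 : R -> R4)
  (Ha : a <> vzero) (Hq : q <> 0) (HI : Rbar_lt lo hi)
  (Hd1 : forall s, in_I lo hi s -> is_derive gamma s (gamma1 s))
  (Hd2 : forall s, in_I lo hi s -> is_derive gamma1 s (gamma2 s))
  (Hd3 : forall s, in_I lo hi s -> is_derive gamma2 s (gamma3 s))
  (HH3 : forall s, in_I lo hi s -> inH3 (gamma s))
  (Hunit : forall s, in_I lo hi s -> lor (gamma1 s) (gamma1 s) = 1)
  (Htraj : forall s, in_I lo hi s ->
     vsub (gamma2 s) (gamma s) = vscal q (cross (gamma s) (Vfield a (gamma s)) (gamma1 s))) :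
  exists a1 a2 : R,
    (forall s, in_I lo hi s -> lor (gamma s) a = a1 * cosh s + a2 * sinh s)
    /\
    ((forall s, in_I lo hi s -> vsub (gamma2 s) (gamma s) = vzero) ->
     exists v w : R4,
       lor v v = -1 /\ lor w w = 1 /\ lor v w = 0 /\
       (exists l1 l2 : R, a = vadd (vscal l1 v) (vscal l2 w)) /\
       (forall s, in_I lo hi s -> gamma s = vadd (vscal (cosh s) v) (vscal (sinh s) w)))
    /\
    ((exists s0, in_I lo hi s0 /\ vsub (gamma2 s0) (gamma s0) <> vzero) ->
     let kappa := fun s => sqrt (lor (vsub (gamma2 s) (gamma s)) (vsub (gamma2 s) (gamma s))) in
     let N := fun s => vscal (/ kappa s) (vsub (gamma2 s) (gamma s)) in
     let B := fun s => cross (gamma s) (gamma1 s) (N s) in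
     forall s, in_I lo hi s ->
       kappa s ^ 2 = q ^ 2 * (lor a a + a1 ^ 2 - a2 ^ 2) /\
       exists dN : R4, is_derive N s dN /\
         proj (gamma s) dN =
         vadd (vscal (- kappa s) (gamma1 s))
              (vscal (q * (a1 * sinh s + a2 * cosh s)) (B s))).
Proof.
  destruct (in_I_nonempty lo hi HI) as [s0 Hs0].
  pose proof (lor_hyperbolic lo hi gamma gamma1 gamma2 Hd1 Hd2 a s0 Hs0
    (curve_lor_accel_a a q lo hi gamma gamma1 gamma2 Htraj)) as Hf.
  exists (lor (base_point gamma gamma1 s0) a), (lor (base_velocity gamma gamma1 s0) a).
  split; [| split].
  - intros s Hs. exact (proj1 (Hf s Hs)).
  - intros Hgeo. exists (base_point gamma gamma1 s0), (base_velocity gamma gamma1 s0).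
    destruct (base_orthonormal lo hi gamma gamma1 Hd1 HH3 Hunit s0 Hs0) as (Hvv & Hww & Hvw).
    repeat split; [exact Hvv | exact Hww | exact Hvw | |].
    + exact (geodesic_axis_in_plane a q lo hi gamma gamma1 gamma2
               Hd1 HH3 Hunit Htraj Hgeo s0 Hq Hs0).
    + exact (geodesic_hyperbola lo hi gamma gamma1 gamma2 Hd1 Hd2 Hgeo s0 Hs0).
  - exact (frenet_equations a q lo hi gamma gamma1 gamma2 Hd1 Hd2 HH3 Hunit Htraj _ _ Hf).
Qed.
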